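(* Consider a Huffman-type combining procedure implemented with the two-queue method: there is a first queue of single (leaf) items and a second queue of compound items; each step removes two nodes, makes them the two children of a new compound node, and appends that new node to the tail of the second queue, until a single node (the root of the final tree) remains; in particular, once the first queue is empty, each step removes the two nodes at the head of the second queue. Suppose that at some step the first queue is empty and $n\ge 1$ compound items remain (all in the second queue). Then, in the final tree, the nodes corresponding to these $n$ compound items lie on levels (depths from the root) differing by at most one, i.e., they are the leaves of a complete binary tree; furthermore, every one of these items that ends up at level $\lceil \log_2 n\rceil$ is closer to the head of the second queue than every one of these items that ends up at level $\lceil \log_2 n\rceil-1$ (if any). *)

From mathcomp Require Import all_boot.
Set Implicit Arguments. Unset Strict Implicit. Unset Printing Implicit Defensive.

(* A leaf
   [BLeaf i] stands for the i-th compound item of the second queue (counted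
   from the head, starting at 0) at the moment the first queue becomes
   empty; these items are opaque for the rest of the procedure. *)
Inductive btree : Type :=
| BLeaf of nat
| BNode of btree & btree.

Definition step (q : seq btree) : seq btree :=
  match q with
  | a :: b :: r => rcons r (BNode a b)
  | _ => q
  end.

Fixpoint depth_of (i : nat) (t : btree) : option nat :=
  match t with
  | BLeaf j => if i == j then Some 0 else None
  | BNode l r =>
      match depth_of i l with
      | Some d => Some d.+1
      | None => omap succn (depth_of i r)
      end
  end.

Definition init_queue (n : nat) : seq btree := map BLeaf (iota 0 n).

From mathcomp Require Import all_boot.
From mathcomp Require Import zify.

(* Write k := (up_log 2 n).-1, so that n = 2^k + m with m <= 2^k.  The first
   m steps pair up the 2m items at the head of the queue, which leaves a queue
   of exactly 2^k trees: the n - 2m remaining items, then the m pairs.  From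
   a queue of 2^k trees the procedure builds a perfect tree on top of them,
   adding k to every depth.  Hence the first 2m items end at depth k + 1 and
   the others at depth k. *)

Fixpoint depth_in (i : nat) (q : seq btree) : option nat :=
  match q with
  | [::] => None
  | t :: r => if depth_of i t is Some d then Some d else depth_in i r
  end.

Lemma depth_in_cat i r s :
  depth_in i (r ++ s) = if depth_in i r is Some d then Some d else depth_in i s.
Proof. by elim: r => //= t r ->; case: (depth_of i t). Qed.

Lemma depth_in_leaves a b i :
  depth_in i (map BLeaf (iota a b)) = if a <= i < a + b then Some 0 else None.
Proof.
elim: b a => [|b IHb] a /=; first by rewrite addn0; case: leqP; rewrite ?ltnNge.
rewrite IHb; case: eqP => [->|i_neq_a]; first by rewrite leqnn addnS ltnS leq_addr.
by case: ifP; case: ifP => //; lia.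
Qed.

Fixpoint pair_up (q : seq btree) : seq btree :=
  if q is a :: b :: r then BNode a b :: pair_up r else [::].

Lemma size_pair_up m s : size s = m.*2 -> size (pair_up s) = m.
Proof. by elim: m s => [|m IHm] [|a [|b s]] //= [] /IHm ->. Qed.

Lemma depth_in_pair_up m s i :
  size s = m.*2 -> depth_in i (pair_up s) = omap succn (depth_in i s).
Proof.
elim: m s => [|m IHm] [|a [|b s]] //= [] /IHm ->.
by case: (depth_of i a) => //; case: (depth_of i b).
Qed.

Lemma iter_step_cat m s r :
  size s = m.*2 -> iter m step (s ++ r) = r ++ pair_up s.
Proof.
elim: m s r => [|m IHm] [|a [|b s]] r // => [_|[] size_s]; first by rewrite cats0.
by rewrite iterSr /= -cats1 -catA IHm // -catA.
Qed.

Lemma iter_step_pow2 k q : size q = 2 ^ k ->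
  exists T, iter (2 ^ k).-1 step q = [:: T] /\
            forall i, depth_of i T = omap (addn k) (depth_in i q).
Proof.
elim: k q => [|k IHk] q size_q.
  case: q size_q => [|t [|]] //= _; exists t; split => // i.
  by case: (depth_of i t).
have size_q2 : size q = (2 ^ k).*2 by rewrite size_q expnS mul2n.
have [T [reduce_pairs depthT]] := IHk _ (size_pair_up _ _ size_q2).
exists T; split.
  have -> : (2 ^ k.+1).-1 = (2 ^ k).-1 + 2 ^ k.
    by rewrite expnS; have := expn_gt0 2 k; lia.
  by rewrite iterD -[q]cats0 iter_step_cat // cats0.
move=> i; rewrite depthT (depth_in_pair_up _ _ _ size_q2).
by case: (depth_in i q) => //= d; rewrite addSnnS.
Qed.

Lemma iter_step_init_queue k m : m <= 2 ^ k ->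
  exists T, iter (2 ^ k + m).-1 step (init_queue (2 ^ k + m)) = [:: T] /\
            forall i, i < 2 ^ k + m ->
              depth_of i T = Some (if i < m.*2 then k.+1 else k).
Proof.
move=> m_le; set pairs := map BLeaf (iota 0 m.*2).
set rest := map BLeaf (iota m.*2 (2 ^ k - m)).
have split_queue : init_queue (2 ^ k + m) = pairs ++ rest.
  by rewrite /init_queue -map_cat -iotaD; congr (map _ (iota _ _)); lia.
have size_pairs : size pairs = m.*2 by rewrite size_map size_iota.
have size_after : size (rest ++ pair_up pairs) = 2 ^ k.
  by rewrite size_cat (size_pair_up _ _ size_pairs) size_map size_iota subnK.
have [T [reduce_after depthT]] := iter_step_pow2 _ _ size_after.
exists T; split.
  have -> : (2 ^ k + m).-1 = (2 ^ k).-1 + m by have := expn_gt0 2 k; lia.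
  by rewrite iterD split_queue iter_step_cat.
move=> i i_lt; rewrite depthT depth_in_cat (depth_in_pair_up _ _ _ size_pairs).
rewrite !depth_in_leaves add0n; case: (leqP m.*2 i) => i_m /=.
  by rewrite ifT /= ?addn0 //; lia.
by rewrite addn1.
Qed.

Lemma up_log2_pred_bounds n : 0 < n ->
  2 ^ (up_log 2 n).-1 <= n <= (2 ^ (up_log 2 n).-1).*2.
Proof.
case: n => [//|[|n]] _; first by rewrite up_log1.
have /andP[lo hi] := up_log_bounds (isT : 1 < 2) (isT : 1 < n.+2).
by rewrite ltnW //= -mul2n -expnS prednK ?up_log_gt0.
Qed.

Theorem lemma2 (n : nat) (hn : 1 <= n) :
  exists T : btree,
    iter n.-1 step (init_queue n) = [:: T] /\
    (forall i, i < n ->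
       depth_of i T = Some (up_log 2 n) \/ depth_of i T = Some (up_log 2 n).-1) /\
    (forall i j k, i < n -> j < n ->
       depth_of i T = Some (up_log 2 n) ->
       depth_of j T = Some k -> k.+1 = up_log 2 n ->
       i < j).
Proof.
have /andP[lo hi] := up_log2_pred_bounds n hn.
set L := up_log 2 n in lo hi *; set m := n - 2 ^ L.-1.
have def_n : n = 2 ^ L.-1 + m by rewrite subnKC.
have [|T [reduce_n depthT]] := iter_step_init_queue L.-1 m; first by lia.
rewrite -def_n in reduce_n depthT.
have L_eq : 0 < m -> L.-1.+1 = L.
  by move=> m_gt0; rewrite prednK // up_log_gt0 /=; have := expn_gt0 2 L.-1; lia.
exists T; split=> //; split.
  move=> i /depthT ->; case: ifP => [i_lt|_]; [left|right] => //.
  by rewrite L_eq //; case: (m) i_lt.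
by move=> i j d /depthT -> /depthT -> [] + [] + dL; case: ifP; case: ifP; lia.
Qed.
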